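(* Let $\ell$ be a positive integer and $n$ an integer such that $n/\ell\in\mathbb Z$ and $n\ell+\ell^2>0$. For $u,v\in\mathbb C$, $\tau\in\mathbb H$ and $n',e'\in\mathbb C$ define $$\chi_{\mathsf T^{n,\ell}_{n',e'}}(u,v;\tau)=i(-1)^{\lfloor e'\rfloor}\frac{\theta_1(u;\tau)}{\eta(\tau)^3}\sum_{m\in\mathbb Z}(-1)^{m\ell}e^{2\pi i v(e'+m\ell)}e^{2\pi i u(n'+mn)}e^{2\pi i\tau\left(n'e'+\frac{e'^2}{2}+\frac{m^2}{2}(2n\ell+\ell^2)+m(ne'+n'\ell+\ell e')\right)},$$ where $\lfloor e'\rfloor$ is the largest integer less than or equal to the real part of $e'$. Then, writing $y=e^{2\pi i v}$, $z=e^{2\pi i u}$, $$\chi_{\mathsf T^{n,\ell}_{n',e'}}(u+1,v;\tau)=e^{2\pi i(n'-1/2)}\chi_{\mathsf T^{n,\ell}_{n',e'}}(u,v;\tau),\qquad \chi_{\mathsf T^{n,\ell}_{n',e'}}(u+\tau,v;\tau)=y^{-1}\chi_{\mathsf T^{n,\ell}_{n'-1,e'+1}}(u,v;\tau),$$ $$\chi_{\mathsf T^{n,\ell}_{n',e'}}(u,v+1;\tau)=e^{2\pi i e'}\chi_{\mathsf T^{n,\ell}_{n',e'}}(u,v;\tau),\qquad \chi_{\mathsf T^{n,\ell}_{n',e'}}(u,v+\tau;\tau)=z^{-1}\chi_{\mathsf T^{n,\ell}_{n'+1,e'}}(u,v;\tau),$$ and more generally, for every $\alpha\in\mathbb R$,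 $$\chi_{\mathsf T^{n,\ell}_{n',e'}}(u,v+\alpha\tau;\tau)=e^{-2\pi i\alpha u}\,\chi_{\mathsf T^{n,\ell}_{n'+\alpha,e'}}(u,v;\tau).$$
   Context: $\theta_1(u;\tau)=-i\sum_{n\in\mathbb Z}(-1)^n e^{\pi i(n+\frac12)^2\tau+2\pi i u(n+\frac12)}$ and $\eta(\tau)=e^{\pi i\tau/12}\prod_{j\ge1}(1-e^{2\pi i j\tau})$. The function $\chi_{\mathsf T^{n,\ell}_{n',e'}}$ is the character of the typical module $\mathsf T^{n,\ell}_{n',e'}$ of a W-superalgebra extending $\widehat{\mathfrak{gl}}(1|1)$; here it is taken as defined by the displayed formula (the series converges since $2n\ell+\ell^2>0$). *)

From Stdlib Require Import Reals ZArith.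
From Coquelicot Require Import Coquelicot.

Open Scope C_scope.

Definition cexp (z : C) : C :=
  ((exp (Re z) * cos (Im z))%R, (exp (Re z) * sin (Im z))%R).

(* Limit of a complex sequence, taken componentwise (total; equals the true
   limit whenever the sequence converges). *)
Definition CLim (s : nat -> C) : C :=
  (real (Lim_seq (fun k => Re (s k))), real (Lim_seq (fun k => Im (s k)))).

Fixpoint csum (f : nat -> C) (n : nat) : C :=
  match n with
  | O => f O
  | S k => csum f k + f (S k)
  end.

Fixpoint cprod (f : nat -> C) (n : nat) : C :=
  match n with
  | O => 1
  | S k => cprod f k * f (S k)
  end.

(* Sum over Z: limit of the symmetric partial sums sum_{|k| <= N} f k. *)
Definition zsum (f : Z -> C) : C :=
  CLim (fun N => csum (fun k => f (Z.of_nat k - Z.of_nat N)%Z) (2 * N)).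

Definition zsign (k : Z) : C := if Z.even k then 1 else -1.

Definition ZtoC (k : Z) : C := RtoC (IZR k).

Definition theta1 (u tau : C) : C :=
  - Ci * zsum (fun k =>
      zsign k * cexp (RtoC PI * Ci * (ZtoC k + /2) * (ZtoC k + /2) * tau
                      + 2 * RtoC PI * Ci * u * (ZtoC k + /2))).

Definition eta (tau : C) : C :=
  cexp (RtoC PI * Ci * tau / 12) *
  CLim (fun N => cprod (fun j => 1 - cexp (2 * RtoC PI * Ci * RtoC (INR j) * tau)) N).

Definition floorRe (z : C) : Z := Int_part (Re z).

Definition chiT (n l : Z) (n' e' u v tau : C) : C :=
  Ci * zsign (floorRe e') * theta1 u tau / (eta tau * eta tau * eta tau) *
  zsum (fun m =>
    zsign (m * l)%Z
    * cexp (2 * RtoC PI * Ci * v * (e' + ZtoC m * ZtoC l))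
    * cexp (2 * RtoC PI * Ci * u * (n' + ZtoC m * ZtoC n))
    * cexp (2 * RtoC PI * Ci * tau *
        (n' * e' + e' * e' / 2
         + ZtoC m * ZtoC m / 2 * (2 * ZtoC n * ZtoC l + ZtoC l * ZtoC l)
         + ZtoC m * (ZtoC n * e' + n' * ZtoC l + ZtoC l * e')))).

(* Every identity is termwise.  Shifting [u] or [v] by [1] multiplies the [m]-th term
   of the sum in [chiT] by a phase independent of [m] (up to [e^{2 pi i k}], [k] an
   integer); shifting [u] by [tau] or [v] by [alpha tau] completes a square and only
   changes the labels [n'], [e'].  For [theta1], [u -> u + tau] is absorbed by the
   reindexing [k -> k + 1].  Pulling constants out of the limit and reindexing are
   justified by the Gaussian decay of the terms; for [chiT] this needs
   [0 < 2 n l + l^2], a consequence of [l | n] and [0 < n l + l^2]. *)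

From Stdlib Require Import Reals ZArith Lia Lra Psatz FunctionalExtensionality.
From Coquelicot Require Import Coquelicot.

Open Scope C_scope.

Lemma cexp_add (a b : C) : cexp (a + b) = cexp a * cexp b.
Proof.
  destruct a as [a1 a2], b as [b1 b2]; unfold cexp, Cmult; simpl.
  rewrite exp_plus, cos_plus, sin_plus; apply injective_projections; simpl; ring.
Qed.

Lemma Cmod_cexp (w : C) : Cmod (cexp w) = exp (Re w).
Proof.
  destruct w as [a b]; unfold cexp, Cmod; simpl.
  replace (exp a * cos b * (exp a * cos b * 1) + exp a * sin b * (exp a * sin b * 1))%R
    with (exp a ^ 2 * (Rsqr (sin b) + Rsqr (cos b)))%R by (unfold Rsqr; ring).
  rewrite sin2_cos2, Rmult_1_r. apply sqrt_pow2, Rlt_le, exp_pos.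
Qed.

Lemma cexp_PI_Ci : cexp (RtoC PI * Ci) = -1.
Proof.
  replace (RtoC PI * Ci) with ((0, PI) : C) by (apply injective_projections; simpl; ring).
  unfold cexp; simpl; rewrite exp_0, cos_PI, sin_PI.
  apply injective_projections; simpl; ring.
Qed.

Lemma cexp_2PI_int (j : Z) : cexp (2 * RtoC PI * Ci * ZtoC j) = 1.
Proof.
  replace (2 * RtoC PI * Ci * ZtoC j) with ((0, 2 * (IZR j * PI))%R : C)
    by (unfold ZtoC; apply injective_projections; simpl; ring).
  assert (Hsin : sin (IZR j * PI) = 0%R) by (apply sin_eq_0_1; exists j; reflexivity).
  unfold cexp; simpl; rewrite exp_0, cos_2a_sin, sin_2a, Hsin.
  apply injective_projections; simpl; ring.
Qed.

Lemma ZtoC_mult (a b : Z) : ZtoC (a * b) = ZtoC a * ZtoC b.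
Proof. unfold ZtoC; rewrite mult_IZR; apply injective_projections; simpl; ring. Qed.

Lemma ZtoC_add1 (a : Z) : ZtoC (a + 1) = ZtoC a + 1.
Proof. unfold ZtoC; rewrite plus_IZR; apply injective_projections; simpl; ring. Qed.

Lemma cexp_add_2PI_int (x : C) (a b : Z) :
  cexp (x + 2 * RtoC PI * Ci * (ZtoC a * ZtoC b)) = cexp x.
Proof. rewrite cexp_add, <- ZtoC_mult, cexp_2PI_int; ring. Qed.

Lemma Cmod_zsign (k : Z) : Cmod (zsign k) = 1%R.
Proof.
  unfold zsign; destruct (Z.even k); [apply Cmod_1 |].
  rewrite <- Cmod_m1; f_equal; apply injective_projections; simpl; ring.
Qed.

Lemma zsign_add1 (k : Z) : zsign (k + 1) = - zsign k.
Proof.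
  unfold zsign; rewrite Z.even_add; simpl.
  destruct (Z.even k); apply injective_projections; simpl; ring.
Qed.

Lemma floorRe_add1 (e : C) : floorRe (e + 1) = (floorRe e + 1)%Z.
Proof.
  unfold floorRe; symmetry; apply Int_part_spec.
  rewrite plus_IZR; destruct (base_Int_part (Re e)).
  replace (Re (e + 1)) with (Re e + 1)%R by (destruct e; reflexivity). lra.
Qed.

Lemma im_le_Cmod (c : C) : (Rabs (Im c) <= Cmod c)%R.
Proof.
  replace (Im c) with (- Re (Ci * c))%R by (destruct c; simpl; ring).
  rewrite Rabs_Ropp, <- (Rmult_1_l (Cmod c)), <- Cmod_Ci, <- Cmod_mult.
  apply re_le_Cmod.
Qed.

Definition is_Clim_seq (s : nat -> C) (L : C) : Prop :=
  is_lim_seq (fun N => Re (s N)) (Re L) /\ is_lim_seq (fun N => Im (s N)) (Im L).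

Lemma is_Clim_seq_unique (s : nat -> C) (L : C) : is_Clim_seq s L -> CLim s = L.
Proof.
  intros [HRe HIm]; unfold CLim.
  rewrite (is_lim_seq_unique _ _ HRe), (is_lim_seq_unique _ _ HIm).
  destruct L; reflexivity.
Qed.

Lemma is_Clim_seq_ext (s t : nat -> C) (L : C) :
  (forall N, s N = t N) -> is_Clim_seq s L -> is_Clim_seq t L.
Proof.
  intros Hst [HRe HIm]; split; eapply is_lim_seq_ext; eauto; intros N; simpl; now rewrite Hst.
Qed.

Lemma is_Clim_seq_plus (s t : nat -> C) (L M : C) :
  is_Clim_seq s L -> is_Clim_seq t M -> is_Clim_seq (fun N => s N + t N) (L + M).
Proof. intros [Hs1 Hs2] [Ht1 Ht2]; split; apply is_lim_seq_plus'; assumption. Qed.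

Lemma is_Clim_seq_scal_l (c : C) (s : nat -> C) (L : C) :
  is_Clim_seq s L -> is_Clim_seq (fun N => c * s N) (c * L).
Proof.
  intros [HRe HIm].
  assert (Hscal : forall (a : R) (u : nat -> R) (l : R),
    is_lim_seq u l -> is_lim_seq (fun N => a * u N)%R (a * l)%R)
    by (intros a u l Hu; exact (is_lim_seq_scal_l u a l Hu)).
  split; simpl.
  - apply is_lim_seq_minus'; apply Hscal; assumption.
  - apply is_lim_seq_plus'; apply Hscal; assumption.
Qed.

Lemma is_Clim_seq_Cmod_0 (s : nat -> C) :
  is_lim_seq (fun N => Cmod (s N)) 0 -> is_Clim_seq s 0.
Proof.
  intros Hs; split; apply is_lim_seq_abs_0;
    apply is_lim_seq_le_le with (fun _ => 0%R) (fun N => Cmod (s N)); auto using is_lim_seq_const;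
    intros N; split; auto using Rabs_pos, re_le_Cmod, im_le_Cmod.
Qed.

Lemma csum_ext (f g : nat -> C) (n : nat) : (forall k, f k = g k) -> csum f n = csum g n.
Proof. intros Hfg; induction n; simpl; rewrite ?IHn, ?Hfg; reflexivity. Qed.

Lemma csum_scal (c : C) (f : nat -> C) (n : nat) : csum (fun k => c * f k) n = c * csum f n.
Proof. induction n as [|n IHn]; simpl; rewrite ?IHn; ring. Qed.

Lemma csum_S_l (g : nat -> C) (n : nat) : csum g (S n) = g O + csum (fun k => g (S k)) n.
Proof. induction n as [|n IHn]; [reflexivity|]. simpl in *; rewrite IHn; ring. Qed.

Definition zsum_n (f : Z -> C) (N : nat) : C :=
  csum (fun k => f (Z.of_nat k - Z.of_nat N)%Z) (2 * N).

Lemma zsum_n_S (f : Z -> C) (N : nat) :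
  zsum_n f (S N) = zsum_n f N + f (- Z.of_nat (S N))%Z + f (Z.of_nat (S N)).
Proof.
  unfold zsum_n. replace (2 * S N)%nat with (S (S (2 * N))) by lia.
  change (csum ?g (S (S ?m))) with (csum g (S m) + g (S (S m))).
  rewrite csum_S_l, (csum_ext _ (fun k => f (Z.of_nat k - Z.of_nat N)%Z))
    by (intros k; f_equal; lia).
  replace (Z.of_nat 0 - Z.of_nat (S N))%Z with (- Z.of_nat (S N))%Z by lia.
  replace (Z.of_nat (S (S (2 * N))) - Z.of_nat (S N))%Z with (Z.of_nat (S N)) by lia.
  ring.
Qed.

Lemma zsum_n_shift (f : Z -> C) (N : nat) :
  zsum_n (fun k => f (k + 1)%Z) N = zsum_n f N + - f (- Z.of_nat N)%Z + f (Z.of_nat N + 1)%Z.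
Proof.
  induction N as [|N IHN].
  { change (zsum_n ?g 0) with (g 0%Z); simpl; ring. }
  rewrite !zsum_n_S, IHN.
  replace (- Z.of_nat (S N) + 1)%Z with (- Z.of_nat N)%Z by lia.
  replace (Z.of_nat (S N)) with (Z.of_nat N + 1)%Z by lia.
  ring.
Qed.

(* Pairing the terms [k] and [-k] turns [zsum_n] into an ordinary series. *)
Definition zpair (g : Z -> R) (j : nat) : R :=
  match j with
  | O => g 0%Z
  | S i => (g (- Z.of_nat (S i))%Z + g (Z.of_nat (S i)))%R
  end.

Lemma sum_n_zpair (p : C -> R) (f : Z -> C) (N : nat) :
  (forall x y, p (x + y) = (p x + p y)%R) ->
  sum_n (zpair (fun k => p (f k))) N = p (zsum_n f N).
Proof.
  intros Hp; induction N as [|N IHN]; [apply sum_O|].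
  rewrite sum_Sn, IHN, zsum_n_S, !Hp; simpl; unfold plus; simpl; ring.
Qed.

Definition exp_decay (f : Z -> C) : Prop :=
  exists D, forall k, (Cmod (f k) <= D * exp (- Rabs (IZR k)))%R.

Lemma exp_decay_ext (f g : Z -> C) : (forall k, f k = g k) -> exp_decay f -> exp_decay g.
Proof. intros Hfg [D HD]; exists D; intros k; rewrite <- Hfg; apply HD. Qed.

Lemma exp_decay_bound_nonneg (f : Z -> C) (D : R) :
  (forall k, Cmod (f k) <= D * exp (- Rabs (IZR k)))%R -> (0 <= D)%R.
Proof.
  intros HD; specialize (HD 0%Z); rewrite Rabs_R0, Ropp_0, exp_0, Rmult_1_r in HD.
  eapply Rle_trans; [apply Cmod_ge_0 | exact HD].
Qed.

Lemma exp_opp_INR (N : nat) : (exp (- INR N) = exp (-1) ^ N)%R.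
Proof.
  induction N as [|N IHN]; [simpl; rewrite Ropp_0; apply exp_0|].
  rewrite S_INR, Ropp_plus_distr, exp_plus, IHN; simpl.
  replace (- (1))%R with (-1)%R by ring; apply Rmult_comm.
Qed.

Lemma Rabs_exp_m1_lt_1 : (Rabs (exp (-1)) < 1)%R.
Proof.
  rewrite Rabs_pos_eq by (left; apply exp_pos).
  rewrite <- exp_0; apply exp_increasing; lra.
Qed.

Lemma exp_le_compat (x y : R) : (x <= y)%R -> (exp x <= exp y)%R.
Proof. intros [Hlt | ->]; [left; apply exp_increasing, Hlt | apply Rle_refl]. Qed.

Lemma ex_series_zpair (g : Z -> R) (D : R) :
  (forall k, Rabs (g k) <= D * exp (- Rabs (IZR k)))%R -> ex_series (zpair g).
Proof.
  intros Hg.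
  assert (Hnat : forall j : nat, (Rabs (g (Z.of_nat j)) <= D * exp (- INR j) /\
                                Rabs (g (- Z.of_nat j)%Z) <= D * exp (- INR j))%R).
  { intros j.
    assert (E : Rabs (IZR (Z.of_nat j)) = INR j)
      by (rewrite <- INR_IZR_INZ; apply Rabs_pos_eq, pos_INR).
    pose proof (Hg (Z.of_nat j)) as Hp; pose proof (Hg (- Z.of_nat j)%Z) as Hm.
    rewrite E in Hp; rewrite opp_IZR, Rabs_Ropp, E in Hm; split; assumption. }
  apply (@ex_series_le R_AbsRing R_CompleteNormedModule) with (fun j => 2 * (D * exp (-1) ^ j))%R.
  - intros j; change (norm (zpair g j)) with (Rabs (zpair g j)); rewrite <- exp_opp_INR.
    destruct (Hnat j) as [Hp Hm].
    assert (0 <= D * exp (- INR j))%R by (eapply Rle_trans; [apply Rabs_pos | exact Hp]).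
    destruct j as [|i].
    + change (Z.of_nat 0) with 0%Z in Hp; simpl zpair; lra.
    + change (zpair g (S i)) with (g (- Z.of_nat (S i))%Z + g (Z.of_nat (S i)))%R.
      pose proof (Rabs_triang (g (- Z.of_nat (S i))%Z) (g (Z.of_nat (S i)))); lra.
  - apply (ex_series_scal 2 (fun j => D * exp (-1) ^ j)%R),
      (ex_series_scal D (fun j => exp (-1) ^ j)%R), ex_series_geom, Rabs_exp_m1_lt_1.
Qed.

Lemma exp_decay_zsum (f : Z -> C) : exp_decay f -> is_Clim_seq (zsum_n f) (zsum f).
Proof.
  intros [D HD].
  assert (Hser : forall p : C -> R, (forall x y, p (x + y) = (p x + p y)%R) ->
    (forall x, Rabs (p x) <= Cmod x)%R -> exists l : R, is_lim_seq (fun N => p (zsum_n f N)) l).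
  { intros p Hp Hmod.
    destruct (ex_series_zpair (fun k => p (f k)) D) as [l Hl].
    { intros k; eapply Rle_trans; [apply Hmod | apply HD]. }
    exists l; eapply is_lim_seq_ext; [intros N; apply (sum_n_zpair p f N Hp) | exact Hl]. }
  destruct (Hser Re) as [l1 H1]; [intros [] []; reflexivity | apply re_le_Cmod |].
  destruct (Hser Im) as [l2 H2]; [intros [] []; reflexivity | apply im_le_Cmod |].
  assert (HL : is_Clim_seq (zsum_n f) (l1, l2)) by (split; assumption).
  unfold zsum; fold (zsum_n f); rewrite (is_Clim_seq_unique _ _ HL); exact HL.
Qed.

Lemma exp_decay_tail (f : Z -> C) (h : nat -> Z) :
  exp_decay f -> (forall N, INR N <= Rabs (IZR (h N)))%R ->
  is_lim_seq (fun N => Cmod (f (h N))) 0.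
Proof.
  intros [D HD] Hh.
  assert (Hgeom : is_lim_seq (fun N => D * exp (- INR N))%R 0).
  { replace (Finite 0) with (Rbar_mult D 0) by (simpl; f_equal; ring).
    apply is_lim_seq_scal_l, is_lim_seq_ext with (fun N => exp (-1) ^ N)%R.
    - intros N; symmetry; apply exp_opp_INR.
    - apply is_lim_seq_geom, Rabs_exp_m1_lt_1. }
  apply is_lim_seq_le_le with (fun _ => 0%R) (fun N => D * exp (- INR N))%R;
    auto using is_lim_seq_const.
  intros N; split; [apply Cmod_ge_0|].
  eapply Rle_trans; [apply HD|].
  pose proof (exp_decay_bound_nonneg f D HD).
  apply Rmult_le_compat_l, exp_le_compat; auto.
  specialize (Hh N); lra.
Qed.

Lemma zsum_scal (c : C) (f : Z -> C) : exp_decay f -> zsum (fun k => c * f k) = c * zsum f.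
Proof.
  intros Hf; apply is_Clim_seq_unique.
  apply is_Clim_seq_ext with (fun N => c * zsum_n f N).
  - intros N; symmetry; apply csum_scal.
  - apply is_Clim_seq_scal_l, exp_decay_zsum, Hf.
Qed.

(* Reindexing changes the symmetric partial sums only by two boundary terms, which vanish. *)
Lemma zsum_shift (f : Z -> C) : exp_decay f -> zsum (fun k => f (k + 1)%Z) = zsum f.
Proof.
  intros Hf; apply is_Clim_seq_unique.
  apply is_Clim_seq_ext with (fun N => zsum_n f N + - f (- Z.of_nat N)%Z + f (Z.of_nat N + 1)%Z);
    [intros N; symmetry; apply zsum_n_shift|].
  replace (zsum f) with (zsum f + 0 + 0) by ring.
  apply is_Clim_seq_plus; [apply is_Clim_seq_plus; [apply exp_decay_zsum, Hf|] |];
    apply is_Clim_seq_Cmod_0.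
  - apply is_lim_seq_ext with (fun N => Cmod (f (- Z.of_nat N)%Z));
      [intros N; symmetry; apply Cmod_opp|].
    apply exp_decay_tail; auto; intros N.
    rewrite opp_IZR, Rabs_Ropp, <- INR_IZR_INZ, Rabs_pos_eq; auto using pos_INR with real.
  - apply exp_decay_tail; auto; intros N.
    rewrite plus_IZR, <- INR_IZR_INZ, Rabs_pos_eq; pose proof (pos_INR N); lra.
Qed.

Lemma zsum_ext_scal (f g : Z -> C) (c : C) :
  exp_decay g -> (forall k, f k = c * g k) -> zsum f = c * zsum g.
Proof.
  intros Hg Hfg; rewrite <- zsum_scal by exact Hg.
  f_equal; apply functional_extensionality, Hfg.
Qed.

Lemma exp_decay_shift (f : Z -> C) : exp_decay f -> exp_decay (fun k => f (k + 1)%Z).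
Proof.
  intros [D HD]; exists (D * exp 1)%R; intros k.
  assert (Htri : (- Rabs (IZR (k + 1)) <= 1 + - Rabs (IZR k))%R).
  { rewrite plus_IZR; pose proof (Rabs_triang (IZR k + 1) (Ropp 1)) as Htri.
    replace (IZR k + 1 + Ropp 1)%R with (IZR k) in Htri by ring.
    rewrite Rabs_Ropp, Rabs_R1 in Htri; lra. }
  eapply Rle_trans; [apply HD|].
  rewrite Rmult_assoc, <- exp_plus.
  pose proof (exp_decay_bound_nonneg f D HD).
  apply Rmult_le_compat_l, exp_le_compat; auto.
Qed.

(* Completing the square: [a x^2 + b x + c <= c + s^2/(-4a) - |x|] with [s = |b| + 1]. *)
Lemma exp_quadratic_bound (a b c : R) : (a < 0)%R ->
  exists D, forall x : R, (exp (a * x * x + b * x + c) <= D * exp (- Rabs x))%R.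
Proof.
  intros Ha; set (s := (Rabs b + 1)%R).
  exists (exp (c + s * s / (-4 * a))); intros x.
  rewrite <- exp_plus; apply exp_le_compat.
  assert (Hx : (x * x = Rabs x * Rabs x)%R)
    by (rewrite <- Rabs_mult, Rabs_pos_eq; [reflexivity | nra]).
  assert (Hb : (b * x <= Rabs b * Rabs x)%R) by (rewrite <- Rabs_mult; apply Rle_abs).
  set (t := Rabs x) in *.
  assert (Hsq : (s * s / (-4 * a) - (a * t * t + s * t) = (s + 2 * a * t) * (s + 2 * a * t) / (-4 * a))%R)
    by (field; lra).
  assert (Hnn : (0 <= (s + 2 * a * t) * (s + 2 * a * t) / (-4 * a))%R)
    by (apply Rmult_le_pos; [apply Rle_0_sqr | left; apply Rinv_0_lt_compat; lra]).
  unfold s in *; nra.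
Qed.

Lemma exp_decay_gaussian (s : Z -> C) (P Q R0 : C) :
  (Re P < 0)%R -> (forall k, Cmod (s k) <= 1)%R ->
  exp_decay (fun k => s k * cexp (P * ZtoC k * ZtoC k + Q * ZtoC k + R0)).
Proof.
  intros HP Hs; destruct (exp_quadratic_bound (Re P) (Re Q) (Re R0) HP) as [D HD].
  exists D; intros k; rewrite Cmod_mult, Cmod_cexp.
  replace (Re (P * ZtoC k * ZtoC k + Q * ZtoC k + R0))
    with (Re P * IZR k * IZR k + Re Q * IZR k + Re R0)%R
    by (destruct P, Q, R0; unfold ZtoC; simpl; ring).
  specialize (HD (IZR k)); pose proof (Hs k); pose proof (Cmod_ge_0 (s k)).
  pose proof (exp_pos (Re P * IZR k * IZR k + Re Q * IZR k + Re R0)); nra.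
Qed.

Lemma Re_PI_Ci_mult (z : C) : Re (RtoC PI * Ci * z) = (- PI * Im z)%R.
Proof. destruct z; simpl; ring. Qed.

Lemma cexp_mul_shift (s d X Y : C) : X = d + Y -> s * cexp X = cexp d * (s * cexp Y).
Proof. intros ->; rewrite cexp_add; ring. Qed.

Lemma cexp_mul_shift_int (s d X Y : C) (a b : Z) :
  X = d + Y + 2 * RtoC PI * Ci * (ZtoC a * ZtoC b) -> s * cexp X = cexp d * (s * cexp Y).
Proof. intros ->; rewrite cexp_add_2PI_int; apply cexp_mul_shift; reflexivity. Qed.

Definition theta1_term (u tau : C) (k : Z) : C :=
  zsign k * cexp (RtoC PI * Ci * (ZtoC k + /2) * (ZtoC k + /2) * tau
                  + 2 * RtoC PI * Ci * u * (ZtoC k + /2)).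

Lemma theta1_zsum (u tau : C) : theta1 u tau = - Ci * zsum (theta1_term u tau).
Proof. reflexivity. Qed.

Lemma theta1_term_decay (u tau : C) : (0 < Im tau)%R -> exp_decay (theta1_term u tau).
Proof.
  intros Htau.
  apply exp_decay_ext with (fun k => zsign k * cexp (RtoC PI * Ci * tau * ZtoC k * ZtoC k
    + (RtoC PI * Ci * tau * (2 * /2) + 2 * RtoC PI * Ci * u) * ZtoC k
    + (RtoC PI * Ci * tau * (/2 * /2) + 2 * RtoC PI * Ci * u * /2))).
  - intros k; unfold theta1_term; do 2 f_equal; ring.
  - apply exp_decay_gaussian.
    + rewrite Re_PI_Ci_mult; pose proof PI_RGT_0; nra.
    + intros k; rewrite Cmod_zsign; apply Rle_refl.
Qed.

Lemma theta1_add1 (u tau : C) : (0 < Im tau)%R -> theta1 (u + 1) tau = - theta1 u tau.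
Proof.
  intros Htau; rewrite !theta1_zsum.
  rewrite (zsum_ext_scal _ (theta1_term u tau) (-1)); [ring | apply theta1_term_decay, Htau |].
  intros k; unfold theta1_term; rewrite <- cexp_PI_Ci.
  apply cexp_mul_shift_int with (a := k) (b := 1%Z); unfold ZtoC; simpl IZR; field.
Qed.

Lemma theta1_add_tau (u tau : C) : (0 < Im tau)%R ->
  theta1 (u + tau) tau = - cexp (- (RtoC PI * Ci * tau) - 2 * RtoC PI * Ci * u) * theta1 u tau.
Proof.
  intros Htau; rewrite !theta1_zsum.
  rewrite (zsum_ext_scal _ (fun k => theta1_term u tau (k + 1)%Z)
             (- cexp (- (RtoC PI * Ci * tau) - 2 * RtoC PI * Ci * u))).
  - rewrite zsum_shift by (apply theta1_term_decay, Htau); ring.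
  - apply exp_decay_shift, theta1_term_decay, Htau.
  - intros k; unfold theta1_term; rewrite zsign_add1, ZtoC_add1.
    match goal with |- _ = - ?c * (- ?s * ?e) => transitivity (c * (s * e)); [|ring] end.
    apply cexp_mul_shift; field.
Qed.

Definition chiT_term (n l : Z) (n' e' u v tau : C) (m : Z) : C :=
  zsign (m * l)%Z
  * cexp (2 * RtoC PI * Ci * v * (e' + ZtoC m * ZtoC l)
          + 2 * RtoC PI * Ci * u * (n' + ZtoC m * ZtoC n)
          + 2 * RtoC PI * Ci * tau *
              (n' * e' + e' * e' / 2
               + ZtoC m * ZtoC m / 2 * (2 * ZtoC n * ZtoC l + ZtoC l * ZtoC l)
               + ZtoC m * (ZtoC n * e' + n' * ZtoC l + ZtoC l * e'))).

Lemma chiT_zsum (n l : Z) (n' e' u v tau : C) :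
  chiT n l n' e' u v tau =
  Ci * zsign (floorRe e') * theta1 u tau / (eta tau * eta tau * eta tau)
  * zsum (chiT_term n l n' e' u v tau).
Proof.
  unfold chiT; do 2 f_equal; apply functional_extensionality; intros m.
  unfold chiT_term; rewrite !cexp_add; ring.
Qed.

Lemma Z_two_mul_add_sqr_pos (n l : Z) :
  (l | n)%Z -> (0 < n * l + l * l)%Z -> (0 < 2 * n * l + l * l)%Z.
Proof. intros [k ->] Hpos; assert (0 <= k)%Z by nia; nia. Qed.

Lemma chiT_term_decay (n l : Z) (n' e' u v tau : C) :
  (0 < 2 * n * l + l * l)%Z -> (0 < Im tau)%R -> exp_decay (chiT_term n l n' e' u v tau).
Proof.
  intros HK Htau.
  apply exp_decay_ext with (fun m => zsign (m * l)%Z * cexp (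
      RtoC PI * Ci * (tau * (2 * ZtoC n * ZtoC l + ZtoC l * ZtoC l)) * ZtoC m * ZtoC m
    + 2 * RtoC PI * Ci * (v * ZtoC l + u * ZtoC n + tau * (ZtoC n * e' + n' * ZtoC l + ZtoC l * e'))
        * ZtoC m
    + 2 * RtoC PI * Ci * (v * e' + u * n' + tau * (n' * e' + e' * e' / 2)))).
  - intros m; unfold chiT_term; do 2 f_equal; field.
  - apply exp_decay_gaussian.
    + apply IZR_lt in HK; rewrite plus_IZR, !mult_IZR in HK.
      rewrite Re_PI_Ci_mult; pose proof PI_RGT_0.
      replace (Im (tau * (2 * ZtoC n * ZtoC l + ZtoC l * ZtoC l)))
        with (Im tau * (2 * IZR n * IZR l + IZR l * IZR l))%R
        by (destruct tau; unfold ZtoC; simpl; ring).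
      assert (0 < PI * (Im tau * (2 * IZR n * IZR l + IZR l * IZR l)))%R
        by (apply Rmult_lt_0_compat; [|apply Rmult_lt_0_compat]; lra).
      lra.
    + intros m; rewrite Cmod_zsign; apply Rle_refl.
Qed.

Lemma cexp_2PI_sub_half (x : C) : cexp (2 * RtoC PI * Ci * (x - /2)) = - cexp (2 * RtoC PI * Ci * x).
Proof.
  assert (Hhalf : cexp (2 * RtoC PI * Ci * x)
                 = cexp (RtoC PI * Ci) * cexp (2 * RtoC PI * Ci * (x - /2)))
    by (rewrite <- cexp_add; f_equal; field).
  rewrite Hhalf, cexp_PI_Ci; ring.
Qed.

Section ChiTQuasiPeriodicity.

Variables (n l : Z) (tau : C).
Hypotheses (HK : (0 < 2 * n * l + l * l)%Z) (Htau : (0 < Im tau)%R).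

Lemma chiT_add1_u (n' e' u v : C) :
  chiT n l n' e' (u + 1) v tau = cexp (2 * RtoC PI * Ci * (n' - /2)) * chiT n l n' e' u v tau.
Proof.
  rewrite !chiT_zsum, theta1_add1, cexp_2PI_sub_half by exact Htau.
  rewrite (zsum_ext_scal _ (chiT_term n l n' e' u v tau) (cexp (2 * RtoC PI * Ci * n')));
    [unfold Cdiv; ring | apply chiT_term_decay; assumption |].
  intros m; apply cexp_mul_shift_int with (a := m) (b := n); unfold Cdiv; field.
Qed.

Lemma chiT_add_tau_u (n' e' u v : C) :
  chiT n l n' e' (u + tau) v tau
  = cexp (- (2 * RtoC PI * Ci * v)) * chiT n l (n' - 1) (e' + 1) u v tau.
Proof.
  rewrite !chiT_zsum, theta1_add_tau, floorRe_add1, zsign_add1 by exact Htau.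
  set (c := - (2 * RtoC PI * Ci * v) + 2 * RtoC PI * Ci * u + RtoC PI * Ci * tau).
  rewrite (zsum_ext_scal _ (chiT_term n l (n' - 1) (e' + 1) u v tau) (cexp c));
    [| apply chiT_term_decay; assumption | intros m; apply cexp_mul_shift; unfold c, Cdiv; field].
  assert (Hphase : cexp (- (RtoC PI * Ci * tau) - 2 * RtoC PI * Ci * u) * cexp c
                   = cexp (- (2 * RtoC PI * Ci * v)))
    by (rewrite <- cexp_add; f_equal; unfold c; ring).
  rewrite <- Hphase; unfold Cdiv; ring.
Qed.

Lemma chiT_add1_v (n' e' u v : C) :
  chiT n l n' e' u (v + 1) tau = cexp (2 * RtoC PI * Ci * e') * chiT n l n' e' u v tau.
Proof.
  rewrite !chiT_zsum.
  rewrite (zsum_ext_scal _ (chiT_term n l n' e' u v tau) (cexp (2 * RtoC PI * Ci * e')));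
    [unfold Cdiv; ring | apply chiT_term_decay; assumption |].
  intros m; apply cexp_mul_shift_int with (a := m) (b := l); unfold Cdiv; field.
Qed.

Lemma chiT_add_mul_tau_v (alpha n' e' u v : C) :
  chiT n l n' e' u (v + alpha * tau) tau
  = cexp (- (2 * RtoC PI * Ci * alpha * u)) * chiT n l (n' + alpha) e' u v tau.
Proof.
  rewrite !chiT_zsum.
  rewrite (zsum_ext_scal _ (chiT_term n l (n' + alpha) e' u v tau)
             (cexp (- (2 * RtoC PI * Ci * alpha * u))));
    [unfold Cdiv; ring | apply chiT_term_decay; assumption |].
  intros m; apply cexp_mul_shift; unfold Cdiv; field.
Qed.

End ChiTQuasiPeriodicity.

Theorem mainTheorem4 (n l : Z) (hl : (0 < l)%Z) (hdiv : (l | n)%Z)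
  (hpos : (0 < n * l + l * l)%Z) (n' e' u v tau : C) (htau : (0 < Im tau)%R) :
  chiT n l n' e' (u + 1) v tau
    = cexp (2 * RtoC PI * Ci * (n' - / 2)) * chiT n l n' e' u v tau
  /\ chiT n l n' e' (u + tau) v tau
    = cexp (- (2 * RtoC PI * Ci * v)) * chiT n l (n' - 1) (e' + 1) u v tau
  /\ chiT n l n' e' u (v + 1) tau
    = cexp (2 * RtoC PI * Ci * e') * chiT n l n' e' u v tau
  /\ chiT n l n' e' u (v + tau) tau
    = cexp (- (2 * RtoC PI * Ci * u)) * chiT n l (n' + 1) e' u v tau
  /\ (forall alpha : R,
      chiT n l n' e' u (v + RtoC alpha * tau) tau
        = cexp (- (2 * RtoC PI * Ci * RtoC alpha * u))
          * chiT n l (n' + RtoC alpha) e' u v tau).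
Proof.
  pose proof (Z_two_mul_add_sqr_pos n l hdiv hpos) as HK.
  split; [|split; [|split; [|split]]].
  - apply chiT_add1_u; assumption.
  - apply chiT_add_tau_u; assumption.
  - apply chiT_add1_v; assumption.
  - rewrite <- (Cmult_1_l tau) at 1.
    replace (2 * RtoC PI * Ci * u) with (2 * RtoC PI * Ci * 1 * u) by ring.
    apply chiT_add_mul_tau_v; assumption.
  - intros alpha; apply chiT_add_mul_tau_v; assumption.
Qed.
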